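(* Let $T$ be a tree with $p\ge 4$ pendant vertices and let $u_1,u_2,u_3,u_4$ be four distinct pendant vertices of $T$. Let $H=\bigcup_{1\le i<j\le 4}P_{u_i,u_j}$ be the minimal subtree of $T$ containing these four vertices. If $m(T,1)\ge p-2$, then $m(H,1)\ge 2$.
   Context: $m(G,\lambda)$ denotes the multiplicity of $\lambda$ as an eigenvalue of the Laplacian matrix $L(G)=D(G)-A(G)$ (zero if not an eigenvalue). A pendant vertex has degree $1$. $P_{r,s}$ is the path in $T$ from $r$ to $s$. *)

From HB Require Import structures.
From mathcomp Require Import all_boot all_order all_algebra.
From Stdlib Require Import ClassicalEpsilon.
Set Implicit Arguments. Unset Strict Implicit. Unset Printing Implicit Defensive.
Import Order.TTheory GRing.Theory Num.Theory.

Definition deg (V : finType) (e : rel V) (x : V) : nat := #|[set y | e x y]|.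

Definition pendant (V : finType) (e : rel V) (x : V) : bool := deg e x == 1%N.

Definition npendant (V : finType) (e : rel V) : nat := #|[set x | pendant e x]|.

(* a tree: simple (symmetric, irreflexive), connected, with |V|-1 edges
   (ordered adjacent pairs counted: 2(|V|-1)) *)
Definition is_tree (V : finType) (e : rel V) : Prop :=
  symmetric e /\ irreflexive e /\ (forall x y, connect e x y) /\
  #|[set p : V * V | e p.1 p.2]| = (2 * #|V|.-1)%N.

Definition laplacian (V : finType) (e : rel V) : 'M[rat]_#|V| :=
  \matrix_(i, j)
    ((if enum_val i == enum_val j then (deg e (enum_val i))%:R else 0)
     - (e (enum_val i) (enum_val j))%:R)%R.

(* m(G, lambda): multiplicity of lambda as an eigenvalue of L(G)
   (root multiplicity in the characteristic polynomial; 0 if not a root) *)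
Definition lap_mult (V : finType) (e : rel V) (l : rat) : nat :=
  mup l (char_poly (laplacian e))%R.

Definition on_path (V : finType) (e : rel V) (u v x : V) : Prop :=
  exists s : seq V, [&& path e u s, last u s == v, uniq (u :: s) & x \in u :: s].

Definition on_pathb (V : finType) (e : rel V) (u v x : V) : bool :=
  if excluded_middle_informative (on_path e u v x) then true else false.

Definition hull4 (V : finType) (e : rel V) (u1 u2 u3 u4 : V) : {set V} :=
  [set x | [|| on_pathb e u1 u2 x, on_pathb e u1 u3 x, on_pathb e u1 u4 x,
              on_pathb e u2 u3 x, on_pathb e u2 u4 x | on_pathb e u3 u4 x]].

Definition induced (V : finType) (e : rel V) (S : {set V}) :
  rel {x : V | x \in S} := fun x y => e (val x) (val y).
Arguments induced {V} e S _ _.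

From mathcomp Require Import all_boot all_order all_algebra.
From mathcomp Require Import zify.
From Stdlib Require Import Classical ClassicalEpsilon.
Set Implicit Arguments. Unset Strict Implicit. Unset Printing Implicit Defensive.
Import Order.TTheory GRing.Theory Num.Theory.

(* Root T at u1.  A 1-eigenvector of L(T) that vanishes on the pendant
   vertices other than u1..u4 vanishes outside H and at every vertex of H
   adjacent to a vertex outside H: going up from the leaves of a branch
   hanging off H, the eigen-equation at a vertex whose children carry 0 and
   which carries 0 itself forces its parent to carry 0.  Such a vector thus
   restricts to a 1-eigenvector of L(H), injectively.  Since L(T) is
   symmetric, its 1-eigenspace has dimension m(T,1) >= p - 2, and vanishing
   on the p - 4 other pendant vertices leaves a subspace of dimension >= 2. *)

Section EigenspaceMultiplicity.
Local Open Scope ring_scope.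
Variable F : fieldType.

Lemma char_poly_castmx n m (eq_nm : n = m) (A : 'M[F]_n) :
  char_poly (castmx (eq_nm, eq_nm) A) = char_poly A.
Proof. by case: m / eq_nm; rewrite castmx_id. Qed.

Lemma mxrank_eigenspace_castmx n m (eq_nm : n = m) (A : 'M[F]_n) a :
  \rank (eigenspace (castmx (eq_nm, eq_nm) A) a) = \rank (eigenspace A a).
Proof. by case: m / eq_nm; rewrite castmx_id. Qed.

Lemma char_poly_conj n (P A : 'M[F]_n) : P \in unitmx ->
  char_poly (P *m A *m invmx P) = char_poly A.
Proof.
move=> uP; rewrite /char_poly /char_poly_mx.
set Pp := map_mx polyC P; set Qp := map_mx polyC (invmx P).
have PQ : Pp *m Qp = 1%:M by rewrite -map_mxM mulmxV // map_mx1.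
have QP : Qp * Pp = 1 by rewrite -mulmxE -map_mxM mulVmx // map_mx1.
have -> : 'X%:M - map_mx polyC (P *m A *m invmx P) =
          Pp *m ('X%:M - map_mx polyC A) *m Qp.
  rewrite mulmxBr mulmxBl !map_mxM mul_mx_scalar -scalemxAl PQ.
  by rewrite -mulmxA scalemx1.
by rewrite !det_mulmx mulrC mulrA -det_mulmx mulmxE QP det1 mul1r.
Qed.

Lemma char_poly_scalar_mx k (a : F) :
  char_poly (a%:M : 'M_k) = ('X - a%:P) ^+ k.
Proof.
rewrite char_poly_trig; last first.
  by apply/is_trig_mxP => i j lt_ij; rewrite !mxE -val_eqE /= (ltn_eqF lt_ij).
rewrite (eq_bigr (fun=> 'X - a%:P)) ?prodr_const ?card_ord // => i _.
by rewrite mxE eqxx.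
Qed.

Lemma char_poly_scalar_lblock k r (a : F) (Y : 'M_(r, k)) (C : 'M_r) :
  char_poly (block_mx a%:M 0 Y C) = ('X - a%:P) ^+ k * char_poly C.
Proof.
rewrite -char_poly_scalar_mx /char_poly /char_poly_mx map_block_mx map_mx0.
rewrite scalar_mx_block opp_block_mx add_block_mx oppr0 addr0.
by rewrite det_lblock.
Qed.

Lemma col_mx_unitmx k r (K : 'M[F]_(k, k + r)) (W : 'M_(r, k + r)) :
  \rank K = k -> \rank W = r -> (K :&: W = 0)%MS -> col_mx K W \in unitmx.
Proof.
move=> rK rW capKW; rewrite -row_free_unit /row_free -addsmxE.
by rewrite mxrank_disjoint_sum // rK rW.
Qed.

(* In a basis starting with the k eigenvectors K, A becomes block lower
   triangular with a scalar upper-left block. *)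
Lemma char_poly_eigen_basis k r (A : 'M[F]_(k + r)) (K : 'M_(k, k + r))
    (W : 'M_(r, k + r)) a :
  col_mx K W \in unitmx -> K *m A = a *: K ->
  char_poly A = ('X - a%:P) ^+ k *
     char_poly (drsubmx (col_mx K W *m A *m invmx (col_mx K W))).
Proof.
move=> uP KA; set P := col_mx K W; set D := P *m A *m invmx P.
rewrite -(char_poly_conj A uP) -/D.
have uD : usubmx D = row_mx a%:M 0.
  have : usubmx (P *m invmx P) = usubmx (1%:M : 'M_(k + r)) by rewrite mulmxV.
  rewrite /D /P !mul_col_mx !col_mxKu KA -scalemxAl => ->.
  by rewrite scalar_mx_block block_mxEv col_mxKu scale_row_mx scalemx1 scaler0.
rewrite -[D]submxK /ulsubmx /ursubmx uD row_mxKl row_mxKr.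
by rewrite block_mxKdr char_poly_scalar_lblock.
Qed.

Lemma mxrank_eigenspace_le_mup_split k r (A : 'M[F]_(k + r)) a :
  \rank (eigenspace A a) = k -> (k <= mup a (char_poly A))%N.
Proof.
move=> rE; set E := eigenspace A a.
pose K : 'M_(k, k + r) := castmx (rE, erefl) (row_base E).
have eK : (K :=: E)%MS by apply: eqmx_trans (eqmx_cast _ _) (eq_row_base _).
have rK : \rank K = k by rewrite eK.
have rW : \rank (K^C)%MS = r by rewrite mxrank_compl rK addKn.
pose W : 'M_(r, k + r) := castmx (rW, erefl) (row_base (K^C)%MS).
have eW : (W :=: K^C)%MS by apply: eqmx_trans (eqmx_cast _ _) (eq_row_base _).
have uP : col_mx K W \in unitmx.
  apply: col_mx_unitmx => //; first by rewrite eW.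
  by apply/eqP; rewrite -submx0 (cap_eqmx (eqmx_refl K) eW) capmx_compl.
have KA : K *m A = a *: K by apply/eigenspaceP; rewrite eK.
rewrite (char_poly_eigen_basis uP KA) mup_geq ?dvdp_mulIl //.
by rewrite -(char_poly_eigen_basis uP KA) monic_neq0 // char_poly_monic.
Qed.

Lemma mxrank_eigenspace_le_mup n (A : 'M[F]_n) a :
  (\rank (eigenspace A a) <= mup a (char_poly A))%N.
Proof.
set k := \rank (eigenspace A a).
have eq_n : n = (k + (n - k))%N by rewrite subnKC // rank_leq_col.
rewrite -(char_poly_castmx eq_n A); apply: mxrank_eigenspace_le_mup_split.
by rewrite mxrank_eigenspace_castmx.
Qed.

End EigenspaceMultiplicity.

Section SymmetricEigenspace.
Local Open Scope ring_scope.
Variable R : realFieldType.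

Lemma mulmx_tr_self_eq0 n (v : 'rV[R]_n) : v *m v^T = 0 -> v = 0.
Proof.
move=> /matrixP /(_ 0 0); rewrite !mxE => vv0.
have sq0 : forall i, (true : bool) -> v 0 i * v^T i 0 = 0.
  by apply/psumr_eq0P => //= i _; rewrite mxE; exact: sqr_ge0.
apply/rowP => i; have /eqP := sq0 i isT.
by rewrite !mxE -expr2 sqrf_eq0 => /eqP.
Qed.

(* For symmetric A, the orthogonal complement W of the eigenspace K is
   A-stable, and a has no eigenvector in W, so the complementary block
   contributes no factor X - a. *)
Lemma mup_le_mxrank_eigenspace_split k r (A : 'M[R]_(k + r)) a : A^T = A ->
  \rank (eigenspace A a) = k -> (mup a (char_poly A) <= k)%N.
Proof.
move=> symA rE; set E := eigenspace A a.
pose K : 'M_(k, k + r) := castmx (rE, erefl) (row_base E).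
have eK : (K :=: E)%MS by apply: eqmx_trans (eqmx_cast _ _) (eq_row_base _).
have rK : \rank K = k by rewrite eK.
have rW : \rank (kermx K^T) = r by rewrite mxrank_ker mxrank_tr rK addKn.
pose W : 'M_(r, k + r) := castmx (rW, erefl) (row_base (kermx K^T)).
have eW : (W :=: kermx K^T)%MS by apply: eqmx_trans (eqmx_cast _ _) (eq_row_base _).
have KA : K *m A = a *: K by apply/eigenspaceP; rewrite eK.
have capKW (v : 'rV_(k + r)) : (v <= K)%MS -> (v <= W)%MS -> v = 0.
  move=> /submxP [c ->]; rewrite eW sub_kermx => /eqP cKK.
  by apply: mulmx_tr_self_eq0; rewrite trmx_mul mulmxA cKK mul0mx.
have uP : col_mx K W \in unitmx.
  apply: col_mx_unitmx => //; first by rewrite eW.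
  apply/eqP/rowV0P => v; rewrite sub_capmx => /andP [vK vW].
  exact: capKW.
have WA_W : (W *m A <= W)%MS.
  rewrite eW sub_kermx -mulmxA.
  have -> : A *m K^T = a *: K^T by rewrite -{1}symA -trmx_mul KA linearZ.
  have WK : W *m K^T = 0 by apply/eqP; rewrite -sub_kermx eW.
  by rewrite -scalemxAr WK scaler0.
set M := W *m A *m pinvmx W.
have WAM : W *m A = M *m W by rewrite mulmxKpV.
have dD : drsubmx (col_mx K W *m A *m invmx (col_mx K W)) = M.
  have : dsubmx (col_mx K W *m invmx (col_mx K W)) =
         dsubmx (1%:M : 'M_(k + r)) by rewrite mulmxV.
  rewrite mul_col_mx col_mxKd scalar_mx_block block_mxEv col_mxKd => WQ.
  rewrite /drsubmx !mul_col_mx col_mxKd WAM -mulmxA WQ mul_mx_row mulmx0 mulmx1.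
  by rewrite row_mxKr.
rewrite (char_poly_eigen_basis uP KA) dD mulrC mupMr; last first.
  rewrite -eigenvalue_root_char; apply/eigenvalueP => [[v vM vn0]].
  have fW : row_free W by rewrite /row_free; apply/eqP; rewrite eW.
  have vW0 : v *m W = 0.
    apply: capKW; last exact: submxMl.
    rewrite eK; apply/eigenspaceP.
    by rewrite -mulmxA WAM mulmxA vM scalemxAl.
  by move/eqP: vW0; rewrite mulmx_free_eq0 // (negPf vn0).
by rewrite mup_XsubCX eqxx.
Qed.

Lemma mup_le_mxrank_eigenspace n (A : 'M[R]_n) a : A^T = A ->
  (mup a (char_poly A) <= \rank (eigenspace A a))%N.
Proof.
move=> symA; set k := \rank (eigenspace A a).
have eq_n : n = (k + (n - k))%N by rewrite subnKC // rank_leq_col.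
rewrite -(char_poly_castmx eq_n A); apply: mup_le_mxrank_eigenspace_split.
  by case: _ / eq_n; rewrite castmx_id.
by rewrite mxrank_eigenspace_castmx.
Qed.

End SymmetricEigenspace.

Lemma mxrank_cap_kermx (F : fieldType) n m (A : 'M[F]_n) (Q : 'M[F]_(n, m)) :
  (\rank A <= \rank (A :&: kermx Q)%MS + m)%N.
Proof.
have := mxrank_sum_cap A (kermx Q).
have : (\rank (A + kermx Q)%MS <= n)%N := rank_leq_col _.
have := mxrank_ker Q; have : (\rank Q <= m)%N := rank_leq_col Q.
have : (\rank Q <= n)%N := rank_leq_row Q.
lia.
Qed.

Section LaplacianAction.
Local Open Scope ring_scope.
Variables (V : finType) (e : rel V).

Definition rVfun (x : 'rV[rat]_#|V|) (w : V) : rat := x 0 (enum_rank w).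

Definition lap_fun (f : V -> rat) (v : V) : rat :=
  f v * (deg e v)%:R - \sum_w f w * (e w v)%:R.

Lemma sum_enum_rank (G : 'I_#|V| -> rat) :
  \sum_(i < #|V|) G i = \sum_(w : V) G (enum_rank w).
Proof.
by rewrite (reindex (@enum_rank V)) //; apply: onW_bij; exact: enum_rank_bij.
Qed.

Lemma laplacian_mulmx x v :
  (x *m laplacian e) 0 (enum_rank v) = lap_fun (rVfun x) v.
Proof.
rewrite mxE sum_enum_rank.
under eq_bigr => w _ do rewrite mxE !enum_rankK mulrBr.
rewrite sumrB (bigD1 v) //= eqxx big1 ?addr0 // => w wv.
by rewrite (negPf wv) mulr0.
Qed.

Lemma eigenspace_laplacianP x l :
  reflect (forall v, lap_fun (rVfun x) v = l * rVfun x v)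
          (x <= eigenspace (laplacian e) l)%MS.
Proof.
apply: (iffP eigenspaceP) => [xL v | xL].
  by rewrite -laplacian_mulmx xL mxE.
apply/matrixP => i j; rewrite (ord1 i) -(enum_valK j) laplacian_mulmx xL.
by rewrite mxE /rVfun enum_valK.
Qed.

Lemma laplacian_sym : symmetric e -> (laplacian e)^T = laplacian e.
Proof.
move=> e_sym; apply/matrixP => i j; rewrite !mxE e_sym eq_sym.
by case: eqP => // ->.
Qed.

End LaplacianAction.

Section Paths.
Variables (V : finType) (e : rel V).
Hypothesis e_connected : forall x y, connect e x y.

Lemma on_pathbP a b x : reflect (on_path e a b x) (on_pathb e a b x).
Proof. by rewrite /on_pathb; case: excluded_middle_informative => h; constructor. Qed.

Lemma uniq_path_exists a b :
  exists s, [&& path e a s, last a s == b & uniq (a :: s)].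
Proof.
case/connectP: (e_connected a b) => p pp ->.
by case/shortenP: pp => p' pp' up' _; exists p'; rewrite pp' up' eqxx.
Qed.

Lemma on_path_start a b : on_path e a b a.
Proof.
case: (uniq_path_exists a b) => s /and3P [ps ls us].
by exists s; rewrite ps ls us inE eqxx.
Qed.

Lemma on_path_end a b : on_path e a b b.
Proof.
case: (uniq_path_exists a b) => s /and3P [ps ls us].
by exists s; rewrite ps ls us -(eqP ls) mem_last.
Qed.

Lemma mem_hull4 u1 u2 u3 u4 :
  [/\ u1 \in hull4 e u1 u2 u3 u4, u2 \in hull4 e u1 u2 u3 u4,
      u3 \in hull4 e u1 u2 u3 u4 & u4 \in hull4 e u1 u2 u3 u4].
Proof.
have onS a b : on_pathb e a b a by apply/on_pathbP; exact: on_path_start.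
have onE a b : on_pathb e a b b by apply/on_pathbP; exact: on_path_end.
by rewrite !inE !onS !onE ?orbT.
Qed.

End Paths.

Section RootedTree.
Variables (V : finType) (e : rel V).
Hypothesis e_sym : symmetric e.
Hypothesis e_connected : forall x y, connect e x y.
Variable r : V.

Definition walk_from_root (v : V) (k : nat) : bool :=
  [exists t : k.-tuple V, path e r t && (last r t == v)].

Lemma walk_from_root_exists v : exists k, walk_from_root v k.
Proof.
case/connectP: (e_connected r v) => p pp ->; exists (size p).
by apply/existsP; exists (in_tuple p); rewrite /= pp eqxx.
Qed.

Definition depth v := ex_minn (walk_from_root_exists v).

Lemma depthP v : walk_from_root v (depth v).
Proof. by rewrite /depth; case: ex_minnP. Qed.

Lemma depth_min v k : walk_from_root v k -> (depth v <= k)%N.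
Proof. by rewrite /depth; case: ex_minnP => m _ min_m /min_m. Qed.

Lemma depth_root : depth r = 0%N.
Proof.
apply/eqP; rewrite -leqn0; apply: depth_min.
by apply/existsP; exists [tuple]; rewrite /= eqxx.
Qed.

Lemma depth_edge w v : e w v -> (depth v <= (depth w).+1)%N.
Proof.
move=> ewv; apply: depth_min; case/existsP: (depthP w) => t /andP [pt /eqP lt].
have sz : size (rcons t v) == (depth w).+1 by rewrite size_rcons size_tuple.
apply/existsP; exists (Tuple sz).
by rewrite /= rcons_path pt lt ewv last_rcons eqxx.
Qed.

Lemma depth_pred v : v != r -> exists w, e w v && ((depth w).+1 == depth v).
Proof.
move=> vr; case/existsP: (depthP v) => t /andP [pt /eqP lt].
move: pt lt; case/lastP: (tval t) (size_tuple t) => [|s z].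
  by move=> _ _ /= rv; rewrite rv eqxx in vr.
rewrite size_rcons rcons_path last_rcons => sz /andP [ps ez] zv.
exists (last r s); rewrite -zv ez /=.
have ws : walk_from_root (last r s) (size s).
  have sz' : size s == size s by [].
  by apply/existsP; exists (Tuple sz'); rewrite /= ps eqxx.
by rewrite eqn_leq (depth_edge ez) andbT zv -sz ltnS (depth_min ws).
Qed.

Definition parent v :=
  if [pick w | e v w && ((depth w).+1 == depth v)] is Some w then w else v.

Lemma parent_root : parent r = r.
Proof. by rewrite /parent; case: pickP => // w /andP [_]; rewrite depth_root. Qed.

Lemma parent_edge v : v != r -> e v (parent v) /\ (depth (parent v)).+1 = depth v.
Proof.
move=> vr; rewrite /parent; case: pickP => [w /andP [ew /eqP dw] // | none].
case: (depth_pred vr) => w /andP [ew dw].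
by move: (none w); rewrite /= e_sym ew dw.
Qed.

Definition ancestor (h z : V) : Prop := exists k, iter k parent z = h.

Lemma not_ancestor_root h : h != r -> ~ ancestor h r.
Proof.
move=> hr [k]; suff -> : iter k parent r = r by move=> rh; rewrite rh eqxx in hr.
by elim: k => //= k ->; rewrite parent_root.
Qed.

Hypothesis e_card : #|[set p : V * V | e p.1 p.2]| = (2 * #|V|.-1)%N.

(* The #|V|.-1 parent edges, in both orientations, already exhaust the
   2 (#|V| - 1) ordered edges of the tree. *)
Lemma edge_parent a b : e a b -> a = parent b \/ b = parent a.
Proof.
move=> eab.
set D1 := [set (v, parent v) | v in [set~ r]].
set D2 := [set (parent v, v) | v in [set~ r]].
have cD1 : #|D1| = #|V|.-1 by rewrite card_imset ?cardsC1 // => x y [].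
have cD2 : #|D2| = #|V|.-1 by rewrite card_imset ?cardsC1 // => x y [].
have dD : [disjoint D1 & D2].
  apply/pred0P => [[x y]] /=; apply/negP => /andP [].
  move=> /imsetP [v vr [-> ->]] /imsetP [w wr [vw wv]]; rewrite !inE in vr wr.
  case: (parent_edge vr) => _; case: (parent_edge wr) => _.
  rewrite -vw wv; lia.
have sD : D1 :|: D2 \subset [set p : V * V | e p.1 p.2].
  apply/subsetP => [[x y]]; rewrite !inE => /orP [] /imsetP [v vr [-> ->]] /=;
  rewrite !inE in vr; case: (parent_edge vr) => // evp _; by rewrite e_sym.
have eD : D1 :|: D2 = [set p : V * V | e p.1 p.2].
  apply/eqP; rewrite eqEcard sD /= e_card cardsU.
  move: dD; rewrite -setI_eq0 => /eqP ->; rewrite cards0 cD1 cD2 subn0.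
  by rewrite mul2n addnn.
have : (a, b) \in D1 :|: D2 by rewrite eD inE.
by rewrite inE => /orP [] /imsetP [v _ [-> ->]]; [right | left].
Qed.

Lemma edge_into_subtree h a b :
  e a b -> ~ ancestor h a -> ancestor h b -> a = parent h.
Proof.
move=> eab nha [k hk]; case: (edge_parent eab) => [ab | ba].
  case: k hk => [/= bh | k hk]; first by rewrite ab bh.
  by exfalso; apply: nha; exists k; rewrite ab -iterSr.
by exfalso; apply: nha; exists k.+1; rewrite iterSr -ba.
Qed.

Lemma path_enters_subtree h a s : path e a s -> ~ ancestor h a ->
  (exists2 z, z \in a :: s & ancestor h z) -> parent h \in a :: s.
Proof.
elim: s a => [|b s IHs] a /=.
  by move=> _ nha [z]; rewrite inE => /eqP -> /nha.
move=> /andP [eab ps] nha [z zs hz].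
case: (classic (ancestor h b)) => hb.
  by rewrite (edge_into_subtree eab nha hb) inE eqxx.
rewrite inE IHs ?orbT //; exists z => //.
move: zs; rewrite inE => /orP [/eqP za | //].
by exfalso; apply: nha; rewrite -za.
Qed.

Lemma on_path_parent a b h :
  on_path e a b h -> ~ ancestor h a -> on_path e a b (parent h).
Proof.
case=> s /and4P [ps ls us hs] nha; exists s; rewrite ps ls us /=.
by apply: path_enters_subtree => //; exists h => //; exists 0%N.
Qed.

Lemma on_path_root_parent a h :
  ancestor h a -> h != r -> on_path e r a (parent h).
Proof.
move=> ha hr; case: (uniq_path_exists e_connected r a) => s /and3P [ps ls us].
exists s; rewrite ps ls us /=; apply: path_enters_subtree => //.
  exact: not_ancestor_root.
by exists a => //; rewrite -(eqP ls) mem_last.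
Qed.

Variables u2 u3 u4 : V.
Let H := hull4 e r u2 u3 u4.

Lemma hull4_parent h : h \in H -> h != r -> parent h \in H.
Proof.
move=> hH hr.
have step a b : on_path e a b h -> on_pathb e a b (parent h) \/ ancestor h a.
  move=> abh; case: (classic (ancestor h a)) => ha; [by right | left].
  by apply/on_pathbP; apply: on_path_parent.
have viaR a : ancestor h a -> on_pathb e r a (parent h).
  by move=> ha; apply/on_pathbP; apply: on_path_root_parent.
have nhr := not_ancestor_root hr.
move: hH; rewrite /H /hull4 !inE.
case/or4P => [/on_pathbP/step [->//|/nhr//] | /on_pathbP/step [->|/nhr//] |
  /on_pathbP/step [->|/nhr//] | ]; rewrite ?orbT //.
case/or3P => [/on_pathbP/step [->|/viaR->] | /on_pathbP/step [->|/viaR->] |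
  /on_pathbP/step [->|/viaR->]]; by rewrite ?orbT.
Qed.

Variable l : rat.
Variable f : V -> rat.
Hypothesis f_eigen : forall v, lap_fun e f v = (l * f v)%R.
Hypothesis f_pendant :
  forall v, pendant e v -> v \notin [:: r; u2; u3; u4] -> f v = 0%R.

Lemma sum_adj_parent y : y != r -> (forall c, parent c = y -> f c = 0%R) ->
  (\sum_w f w * (e w y)%:R = f (parent y))%R.
Proof.
move=> yr child0; rewrite (bigD1 (parent y)) //=.
case: (parent_edge yr) => eyp _; rewrite e_sym eyp mulr1 big1 ?addr0 // => w wp.
case ewy: (e w y); last by rewrite mulr0.
case: (edge_parent ewy) => [wpy | ypw]; first by rewrite wpy eqxx in wp.
by rewrite child0 ?mul0r.
Qed.

Lemma childless_pendant y : y != r -> (forall c, parent c != y) -> pendant e y.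
Proof.
move=> yr nochild; rewrite /pendant /deg.
have -> : [set w | e y w] = [set parent y].
  apply/setP => w; rewrite !inE; apply/idP/eqP => [eyw | ->].
    by case: (edge_parent eyw) => [ypw | //]; move: (nochild w); rewrite ypw eqxx.
  by case: (parent_edge yr).
by rewrite cards1.
Qed.

Lemma eigen_vanish_branch y : y \notin H -> f y = 0%R /\ f (parent y) = 0%R.
Proof.
have [rH u2H u3H u4H] := mem_hull4 e_connected r u2 u3 u4.
set B := (\max_(v : V) depth v).+1.
have ltB v : (depth v < B)%N by rewrite ltnS (leq_bigmax v).
suff : forall n y, (B - depth y <= n)%N -> y \notin H ->
    f y = 0%R /\ f (parent y) = 0%R by apply.
elim=> [|n IHn] {}y; first by have := ltB y; lia.
move=> le_n yH; have yr : y != r by apply: contraNneq yH => ->.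
have child0 c : parent c = y -> f c = 0%R /\ f (parent c) = 0%R.
  move=> cy; have cr : c != r.
    by apply: contra_eq_neq cy => ->; rewrite parent_root eq_sym.
  apply: IHn; last by apply: contra yH => cH; rewrite -cy hull4_parent.
  by case: (parent_edge cr) => _; rewrite cy; have := ltB y; lia.
have fy0 : f y = 0%R.
  case: (pickP (fun c => parent c == y)) => [c /eqP cy | nochild].
    by case: (child0 c cy) => _; rewrite cy.
  apply: f_pendant; first by apply: childless_pendant => // c; rewrite nochild.
  by rewrite !inE; apply: contra yH => /or4P [] /eqP ->.
split=> //; have := f_eigen y.
rewrite /lap_fun sum_adj_parent // => [|c /child0 []//].
by rewrite fy0 mulr0 mul0r sub0r => /eqP; rewrite oppr_eq0 => /eqP.
Qed.

Lemma eigen_vanish_outside w : w \notin H -> f w = 0%R.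
Proof. by case/eigen_vanish_branch. Qed.

Lemma eigen_vanish_attached h w : e h w -> w \notin H -> f h = 0%R.
Proof.
have [rH _ _ _] := mem_hull4 e_connected r u2 u3 u4.
move=> ehw wH; case: (edge_parent ehw) => [hpw | wph].
  by case: (eigen_vanish_branch wH); rewrite hpw.
apply: eigen_vanish_outside; apply: contra wH => hH.
have [hr | hr] := eqVneq h r; first by rewrite wph hr parent_root.
by rewrite wph hull4_parent.
Qed.

End RootedTree.

Lemma card_pendant_notin (V : finType) (e : rel V) (s : seq V) :
  uniq s -> all (pendant e) s ->
  (#|[set v | pendant e v & v \notin s]| + size s)%N = npendant e.
Proof.
move=> us ps; rewrite /npendant -(cardsID [set v in s] [set v | pendant e v]).
rewrite addnC; congr (_ + _)%N; last by apply: eq_card => v; rewrite !inE andbC.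
have -> : [set v | pendant e v] :&: [set v in s] = [set v in s].
  by apply/setIidPr/subsetP => v; rewrite !inE => /(allP ps).
by rewrite cardsE (card_uniqP us).
Qed.

Section InducedRestriction.
Local Open Scope ring_scope.
Variables (V : finType) (e : rel V) (S : {set V}).

Definition restrict_mx : 'M[rat]_(#|V|, #|{: {x : V | x \in S}}|) :=
  \matrix_(i, j) (enum_val i == val (enum_val j))%:R.

Lemma rVfun_restrict x (h : {x : V | x \in S}) :
  rVfun (x *m restrict_mx) h = rVfun x (val h).
Proof.
rewrite /rVfun mxE sum_enum_rank (bigD1 (val h)) //= big1 ?addr0.
  by rewrite mxE !enum_rankK eqxx mulr1.
by move=> w wh; rewrite mxE !enum_rankK (negPf wh) mulr0.
Qed.

Lemma sub_kermx_restrict x :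
  (x <= kermx restrict_mx)%MS -> {in S, forall v, rVfun x v = 0}.
Proof.
rewrite sub_kermx => /eqP xR v vS.
pose h : {x : V | x \in S} := exist _ v vS.
by rewrite -[v]/(val h) -rVfun_restrict xR /rVfun mxE.
Qed.

Lemma restrict_mx_inj x : (forall w, w \notin S -> rVfun x w = 0) ->
  x *m restrict_mx = 0 -> x = 0.
Proof.
move=> x_out xR; apply/rowP => j; rewrite mxE -(enum_valK j).
case wS: (enum_val j \in S); last by apply: x_out; rewrite wS.
pose h : {x : V | x \in S} := exist _ (enum_val j) wS.
by rewrite -[LHS]/(rVfun x (val h)) -rVfun_restrict xR /rVfun mxE.
Qed.

Lemma lap_fun_induced (f : V -> rat) (g : {x : V | x \in S} -> rat) h :
  (forall k, g k = f (val k)) ->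
  (forall w, w \notin S -> f w = 0) ->
  (forall w, e (val h) w -> w \notin S -> f (val h) = 0) ->
  lap_fun (induced e S) g h = lap_fun e f (val h).
Proof.
move=> g_val f_out f_attached; rewrite /lap_fun g_val; congr (_ - _).
  have [-> | fh] := eqVneq (f (val h)) 0; first by rewrite !mul0r.
  congr (_ * _%:R); rewrite /deg -(card_imset _ val_inj); apply: eq_card => w.
  rewrite [in RHS]inE; apply/imsetP/idP => [[k] | ehw].
    by rewrite inE => ehk ->.
  case wS: (w \in S); last by rewrite (f_attached w ehw (negbT wS)) eqxx in fh.
  by exists (exist _ w wS); rewrite // inE.
under eq_bigr do rewrite g_val.
rewrite /induced -(big_sub S (fun w => f w * (e w (val h))%:R)) big_mkcond.
by apply: eq_bigr => w _; case: ifP => // /negbT wS; rewrite f_out // mul0r.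
Qed.

Lemma mxrank_eigenspace_induced l m (K : 'M[rat]_(m, #|V|)) :
  (K <= eigenspace (laplacian e) l)%MS ->
  (forall x, (x <= K)%MS -> (forall w, w \notin S -> rVfun x w = 0) /\
     (forall h w, e h w -> w \notin S -> rVfun x h = 0)) ->
  (\rank K <= \rank (eigenspace (laplacian (induced e S)) l))%N.
Proof.
move=> K_eigen K_supp.
have restrict_eigen (x : 'rV_#|V|) : (x <= K)%MS ->
    (x *m restrict_mx <= eigenspace (laplacian (induced e S)) l)%MS.
  move=> xK; have [x_out x_att] := K_supp x xK.
  have /eigenspace_laplacianP x_eigen := submx_trans xK K_eigen.
  apply/eigenspace_laplacianP => h; rewrite rVfun_restrict -x_eigen.
  apply: lap_fun_induced => // [k | w]; first exact: rVfun_restrict.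
  exact: x_att.
have capK0 : (K :&: kermx restrict_mx)%MS = 0.
  apply/eqP/rowV0P => x; rewrite sub_capmx sub_kermx => /andP [xK /eqP xR].
  by apply: restrict_mx_inj xR; case: (K_supp x xK).
rewrite -[X in (X <= _)%N](mxrank_mul_ker K restrict_mx) capK0 mxrank0 addn0.
apply: mxrankS; apply/row_subP => i; rewrite row_mul.
exact/restrict_eigen/row_sub.
Qed.

End InducedRestriction.

Theorem mainTheorem11 (V : finType) (e : rel V) (u1 u2 u3 u4 : V) :
  is_tree e ->
  (4 <= npendant e)%N ->
  pendant e u1 -> pendant e u2 -> pendant e u3 -> pendant e u4 ->
  uniq [:: u1; u2; u3; u4] ->
  ((npendant e).-2 <= lap_mult e 1)%N ->
  (2 <= lap_mult (induced e (hull4 e u1 u2 u3 u4)) 1)%N.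
Proof.
(* [4 <= npendant e] is implied by the four distinct pendant vertices. *)
case=> e_sym [_ [e_conn e_card]] _ pu1 pu2 pu3 pu4 uniq_u mult_T.
set P := [set v | pendant e v & v \notin [:: u1; u2; u3; u4]].
set E := eigenspace (laplacian e) 1.
set K := (E :&: kermx (restrict_mx P))%MS.
have mult_E : ((npendant e).-2 <= \rank E)%N.
  exact: leq_trans mult_T (mup_le_mxrank_eigenspace 1 (laplacian_sym e_sym)).
have rankK : (2 <= \rank K)%N.
  have all_p : all (pendant e) [:: u1; u2; u3; u4] by apply/and5P.
  have := card_pendant_notin uniq_u all_p; rewrite -/P /= => cardP.
  have cap : (\rank E <= \rank K + #|{: {x : V | x \in P}}|)%N.
    exact: mxrank_cap_kermx.
  rewrite card_sig in cap; rewrite -cardP -subn2 in mult_E.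
  by move: (leq_trans mult_E cap); rewrite -addnBA // addnC leq_add2r.
apply: leq_trans rankK (leq_trans _ (mxrank_eigenspace_le_mup _ _)).
apply: mxrank_eigenspace_induced; first exact: capmxSl.
move=> x; rewrite sub_capmx => /andP [/eigenspace_laplacianP x_eigen].
move=> /sub_kermx_restrict x_P.
have x_pendant v : pendant e v -> v \notin [:: u1; u2; u3; u4] -> rVfun x v = 0%R.
  by move=> pv vu; apply: x_P; rewrite inE pv vu.
split=> [w | h w]; first exact: eigen_vanish_outside x_eigen x_pendant w.
exact: eigen_vanish_attached x_eigen x_pendant h w.
Qed.
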